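(* Let $k$ be a positive integer and let $G$ be a finite graph whose vertex set is partitioned into stable sets $V_1,\ldots,V_r$. If for each $i \in \{1,\ldots,r\}$ each vertex in $V_i$ has degree at most $\min\{k, |V_i|-k\}$, then for any vertex $v$ of $G$, $G$ has an ISR containing $v$.
   Context: An independent system of representatives (ISR) of $(V_1,\ldots,V_r)$ is a stable set of size $r$ in $G$ meeting each $V_i$ exactly once. *)

From mathcomp Require Import all_boot all_order all_algebra.
Set Implicit Arguments. Unset Strict Implicit. Unset Printing Implicit Defensive.

Definition simple_graph (T : finType) (e : rel T) : Prop :=
  symmetric e /\ irreflexive e.

Definition stable (T : finType) (e : rel T) (S : {set T}) : Prop :=
  forall x y, x \in S -> y \in S -> ~~ e x y.

Definition deg (T : finType) (e : rel T) (x : T) : nat := #|[set y | e x y]|.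

Definition part (T : finType) (r : nat) (p : T -> 'I_r) (i : 'I_r) : {set T} :=
  [set x | p x == i].

Definition is_ISR (T : finType) (e : rel T) (r : nat) (p : T -> 'I_r) (S : {set T}) : Prop :=
  stable e S /\ #|S| = r /\ forall i : 'I_r, #|S :&: part p i| = 1.

From mathcomp Require Import all_boot all_order all_algebra zify.
Import Order.TTheory GRing.Theory Num.Theory.
Set Implicit Arguments. Unset Strict Implicit. Unset Printing Implicit Defensive.

(* Haxell's alternating-tree argument: classes are added one at a time to a
   partial ISR g.  To add the class of v, grow a tree rooted at v whose edges
   join a reached vertex to a vertex of g; the reached vertices are v and the
   classes of the tree edges.  Since deg x + deg y <= |V_(p y)|, the tree edges
   cannot dominate all reached vertices, so pick an undominated reached x.  If
   x has a neighbour in g, it becomes a new tree edge; otherwise x replaces the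
   vertex of g in its class and the tree is cut back before that class.  A
   lexicographic potential counting the neighbours in g of the tree vertices
   decreases at every step, so eventually x = v has no neighbour in g, and v
   can be added. *)

Fixpoint lex_lt (x y : seq nat) : bool :=
  match x, y with
  | [::], _ => false
  | _ :: _, [::] => true
  | a :: x', b :: y' => (a < b) || ((a == b) && lex_lt x' y')
  end.

Lemma lex_lt_extend u c w : lex_lt (u ++ c :: w) u.
Proof. by elim: u => [|a u IH] //=; rewrite eqxx IH orbT. Qed.

Lemma lex_lt_map (A : eqType) (s : seq A) (f' f : A -> nat) c' c w' w :
  (forall z, z \in s -> f' z <= f z) -> c' < c ->
  lex_lt (map f' s ++ c' :: w') (map f s ++ c :: w).
Proof.
elim: s => [|a s IH] le_f lt_c /=; first by rewrite lt_c.
rewrite IH => [|z zs|//]; last by rewrite le_f // inE zs orbT.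
by rewrite andbT orbC -leq_eqVlt le_f ?mem_head.
Qed.

Definition lex_bounded (B L : nat) (m : seq nat) :=
  (size m <= L) && all (fun a => a < B) m.

(* [m], padded with digits [B] up to length [L], read in base [B.+1]; the
   padding ranks a sequence above all of its extensions. *)
Fixpoint lex_rank (B L : nat) (m : seq nat) : nat :=
  match L, m with
  | 0, _ => 0
  | L'.+1, [::] => B.+1 ^ L'.+1 - 1
  | L'.+1, a :: m' => a * B.+1 ^ L' + lex_rank B L' m'
  end.

Lemma lex_rank_lt B L m : lex_bounded B L m -> lex_rank B L m < B.+1 ^ L.
Proof.
rewrite /lex_bounded; elim: L m => [|L IH] [|a m] //=.
  by move=> _; have := expn_gt0 B.+1 L.+1; lia.
rewrite ltnS => /and3P[size_m lt_aB all_m].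
have := IH m; rewrite size_m all_m expnS => /(_ isT).
set P := B.+1 ^ L; nia.
Qed.

Lemma lex_rank_mono B L x y : lex_bounded B L x -> lex_bounded B L y ->
  lex_lt x y -> lex_rank B L x < lex_rank B L y.
Proof.
elim: L x y => [|L IH] [|a x] [|b y] //= bx by_ lt_xy.
- move: bx; rewrite /lex_bounded /= ltnS => /and3P[size_x lt_aB all_x].
  have /lex_rank_lt : lex_bounded B L x by apply/andP.
  by rewrite expnS; have := expn_gt0 B.+1 L; set P := B.+1 ^ L; nia.
- move: bx by_; rewrite /lex_bounded /= !ltnS.
  move=> /and3P[size_x lt_aB all_x] /and3P[size_y lt_bB all_y].
  have bx : lex_bounded B L x by apply/andP.
  have by_ : lex_bounded B L y by apply/andP.
  have := lex_rank_lt bx; have := lex_rank_lt by_.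
  case/orP: lt_xy => [lt_ab|/andP[/eqP <- /(IH _ _ bx by_)]]; last by lia.
  by set P := B.+1 ^ L; nia.
Qed.

Lemma lex_descent (X : Type) (inv : X -> Prop) (f : X -> seq nat) (B L : nat) (P : Prop) :
  (forall x, inv x -> lex_bounded B L (f x)) ->
  (forall x, inv x -> P \/ exists2 y, inv y & lex_lt (f y) (f x)) ->
  forall x, inv x -> P.
Proof.
move=> bounded step x; move: {2}(lex_rank B L (f x)).+1 (ltnSn (lex_rank B L (f x))) => n.
elim: n x => [//|n IH] x; rewrite ltnS => rank_x inv_x.
have [//|[y inv_y lt_yx]] := step x inv_x.
have lt_rank := lex_rank_mono (bounded _ inv_y) (bounded _ inv_x) lt_yx.
exact: IH y (leq_trans lt_rank rank_x) inv_y.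
Qed.

Lemma card_bigcup_seq (T : finType) (I : Type) (s : seq I) (F : I -> {set T}) :
  #|\bigcup_(i <- s) F i| <= \sum_(i <- s) #|F i|.
Proof.
elim: s => [|i s IH]; first by rewrite !big_nil cards0.
by rewrite !big_cons (leq_trans (leq_card_setU _ _)) ?leq_add2l.
Qed.

Lemma nat_le_min_sub (a b k : nat) :
  (a%:Z <= Num.min k%:Z (b%:Z - k%:Z))%R -> a <= k /\ a + k <= b.
Proof. by rewrite le_min => /andP[le_ak le_abk]; split; lia. Qed.

Section ISR.
Variables (T : finType) (e : rel T) (r : nat) (p : T -> 'I_r).
Hypotheses (e_sym : symmetric e) (e_irr : irreflexive e).
Hypothesis deg_sum_bound : forall x y, deg e x + deg e y <= #|part p (p y)|.
Hypothesis part_nonempty : forall i, part p i != set0.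

Definition partial_ISR (C : {set 'I_r}) (g : 'I_r -> T) :=
  (forall i, i \in C -> p (g i) = i) /\
  (forall i j, i \in C -> j \in C -> ~~ e (g i) (g j)).

Definition reassign (g : 'I_r -> T) (x : T) (i : 'I_r) : T :=
  if i == p x then x else g i.

Lemma partial_ISR_reassign C g x : partial_ISR C g ->
  (forall j, j \in C -> ~~ e x (g j)) -> partial_ISR (p x |: C) (reassign g x).
Proof.
move=> [g_part g_stable] x_free; split=> [i|i j]; rewrite !inE /reassign.
  by case: eqP => [->|_ /g_part].
case: eqP => _; case: eqP => _ //= iC jC.
- by rewrite e_irr.
- exact: x_free.
- by rewrite e_sym x_free.
- exact: g_stable.
Qed.

Lemma ISR_of_partial_ISR g : partial_ISR [set: 'I_r] g -> is_ISR e p (g @: [set: 'I_r]).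
Proof.
move=> [g_part g_stable].
have g_inj : injective g by move=> i j eq_g; rewrite -[i]g_part ?inE // eq_g g_part ?inE.
split; [|split].
- by move=> _ _ /imsetP[i _ ->] /imsetP[j _ ->]; apply: g_stable; rewrite inE.
- by rewrite card_imset // cardsT card_ord.
- move=> i; rewrite -(cards1 (g i)); congr #|pred_of_set _|.
  apply/setP => y; rewrite !inE.
  apply/andP/eqP => [[/imsetP[j _ ->] /eqP <-]|->]; first by rewrite g_part ?inE.
  by rewrite imset_f ?inE //= g_part ?inE.
Qed.

Lemma card_part_seq (cs : seq 'I_r) : uniq cs ->
  #|[set x | p x \in cs]| = \sum_(c <- cs) #|part p c|.
Proof.
move=> ucs; rewrite big_uniq //= -sum1_card.
rewrite (partition_big p (mem cs)) => [|x]; last by rewrite inE.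
apply: eq_bigr => c cs_c; rewrite -sum1_card; apply: eq_bigl => x.
by rewrite !inE; case: eqP => [->|]; rewrite ?andbT ?andbF.
Qed.

Section AlternatingTree.
Variables (C : {set 'I_r}) (v : T).
Hypothesis vNC : p v \notin C.

(* A tree edge [z] joins [z.1], a vertex reached earlier, to the ISR vertex
   [z.2] of the class [p z.2]. *)
Definition edge_class (z : T * T) : 'I_r := p z.2.

Definition dominated (s : seq (T * T)) (w : T) := has (fun z => e z.1 w || e z.2 w) s.

Definition reached (s : seq (T * T)) (w : T) := (w == v) || (p w \in map edge_class s).

Definition tree_edge (pre : seq (T * T)) (z : T * T) :=
  [&& e z.1 z.2, reached pre z.1 & ~~ dominated pre z.1].

Fixpoint alt_tree_from (pre s : seq (T * T)) : bool :=
  if s is z :: s' then tree_edge pre z && alt_tree_from (rcons pre z) s' else true.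

Definition tree_on_ISR (g : 'I_r -> T) (s : seq (T * T)) :=
  forall z, z \in s -> edge_class z \in C /\ g (edge_class z) = z.2.

Definition ISR_nbrs (g : 'I_r -> T) (x : T) := #|[set i in C | e x (g i)]|.

Variant state := State of 'I_r -> T & seq (T * T) & option T.

Definition state_inv (st : state) :=
  let: State g s pd := st in
  [/\ partial_ISR C g, alt_tree_from [::] s, tree_on_ISR g s &
      if pd is Some x then reached s x && ~~ dominated s x else true].

(* A pending vertex [x] weighs [2 a + 1] but only [2 a] once it becomes the
   first end of a tree edge, so attaching an edge decreases the potential. *)
Definition potential (st : state) :=
  let: State g s pd := st in
  map (fun z => 2 * ISR_nbrs g z.1) s ++
  (if pd is Some x then [:: (2 * ISR_nbrs g x).+1] else [::]).

Definition descends (st : state) :=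
  exists2 st', state_inv st' & lex_lt (potential st') (potential st).

Lemma alt_tree_from_cat pre s1 s2 :
  alt_tree_from pre (s1 ++ s2) = alt_tree_from pre s1 && alt_tree_from (pre ++ s1) s2.
Proof.
elim: s1 pre => [|z s1 IH] pre /=; first by rewrite cats0.
by rewrite IH cat_rcons andbA.
Qed.

Lemma alt_tree_distinct s1 z s2 w :
  alt_tree_from [::] (s1 ++ z :: s2) -> w \in s1 -> w.2 != z.2.
Proof.
rewrite alt_tree_from_cat /= => /and3P[_ /and3P[ez _ /hasPn z_undom] _] ws.
by apply: contraNneq (z_undom w ws) => ->; rewrite (e_sym z.2) ez orbT.
Qed.

Lemma uniq_tree_classes g s :
  alt_tree_from [::] s -> tree_on_ISR g s -> uniq (map edge_class s).
Proof.
elim/last_ind: s => [//|s z IH] s_tree s_on.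
have s_on' : tree_on_ISR g s by move=> w ws; apply: s_on; rewrite mem_rcons inE ws orbT.
rewrite -cats1 in s_tree.
have s_tree' : alt_tree_from [::] s by move: s_tree; rewrite alt_tree_from_cat => /andP[].
rewrite map_rcons rcons_uniq IH // andbT; apply/mapP => -[w ws eq_cls].
have /negP := alt_tree_distinct s_tree ws; apply; apply/eqP.
have /s_on[_ <-] : w \in rcons s z by rewrite mem_rcons inE ws orbT.
have /s_on[_ <-] : z \in rcons s z by rewrite mem_rcons mem_head.
by rewrite eq_cls.
Qed.

Lemma card_reached g s : alt_tree_from [::] s -> tree_on_ISR g s ->
  #|[set w | reached s w]| = 1 + \sum_(z <- s) #|part p (edge_class z)|.
Proof.
move=> s_tree s_on.
have -> : [set w | reached s w] = v |: [set w | p w \in map edge_class s].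
  by apply/setP => w; rewrite !inE.
rewrite cardsU1 card_part_seq ?(uniq_tree_classes s_tree s_on) // big_map inE.
by case: mapP => // -[z /s_on[zC _] pv]; move: vNC; rewrite pv zC.
Qed.

Lemma card_dominated s :
  #|[set w | dominated s w]| <= \sum_(z <- s) (deg e z.1 + deg e z.2).
Proof.
have -> : [set w | dominated s w] =
    \bigcup_(z <- s) ([set w | e z.1 w] :|: [set w | e z.2 w]).
  apply/setP => w; rewrite inE bigcup_seq.
  by apply/hasP/bigcupP => -[z zs ez]; exists z; rewrite // !inE in ez *.
apply: leq_trans (card_bigcup_seq _ _) _.
by apply: leq_sum => z _; apply: leq_card_setU.
Qed.

Lemma exists_undominated g s : alt_tree_from [::] s -> tree_on_ISR g s ->
  exists w, reached s w && ~~ dominated s w.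
Proof.
move=> s_tree s_on.
have lt_dom_reached : #|[set w | dominated s w]| < #|[set w | reached s w]|.
  rewrite (card_reached s_tree s_on) add1n ltnS; apply: leq_trans (card_dominated s) _.
  by apply: leq_sum => z _; apply: deg_sum_bound.
have /subsetPn[w] : ~~ ([set w | reached s w] \subset [set w | dominated s w]).
  by apply: contraTN lt_dom_reached => /subset_leq_card; rewrite -leqNgt.
by rewrite !inE => reached_w undom_w; exists w; rewrite reached_w.
Qed.

Lemma ISR_nbrs_reassign g x y : ~~ e y x ->
  ISR_nbrs (reassign g x) y + ((p x \in C) && e y (g (p x))) <= ISR_nbrs g y.
Proof.
move=> yNx; rewrite /ISR_nbrs (cardsD1 (p x) [set i in C | e y (g i)]) inE addnC leq_add2l.
apply/subset_leq_card/subsetP => i; rewrite !inE /reassign.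
by case: eqP => [->|_]; rewrite ?(negbTE yNx) ?andbF.
Qed.

Lemma potential_bounded st : state_inv st -> lex_bounded (2 * r).+2 r.+1 (potential st).
Proof.
case: st => g s pd [_ s_tree s_on _].
have nbrs_le x : ISR_nbrs g x <= r by rewrite (leq_trans (max_card _)) ?card_ord.
have size_s : size s <= r.
  have /card_uniqP := uniq_tree_classes s_tree s_on; rewrite size_map => <-.
  by rewrite (leq_trans (max_card _)) ?card_ord.
rewrite /lex_bounded /potential size_cat size_map all_cat; apply/and3P; split.
- by case: pd => [x|] /=; lia.
- by apply/allP => _ /mapP[z _ ->] /=; rewrite ltnS leqW // leq_mul2l nbrs_le orbT.
- by case: pd => [x|] //=; have := nbrs_le x; lia.
Qed.

Lemma grow_step g s : state_inv (State g s None) -> descends (State g s None).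
Proof.
move=> [g_ISR s_tree s_on _]; have [w reached_undom_w] := exists_undominated s_tree s_on.
by exists (State g s (Some w)); rewrite /= ?cats0 ?lex_lt_extend.
Qed.

Lemma attach_step g s x i : state_inv (State g s (Some x)) ->
  i \in C -> e x (g i) -> descends (State g s (Some x)).
Proof.
move=> [g_ISR s_tree s_on /andP[reached_x undom_x]] iC exi.
exists (State g (rcons s (x, g i)) None); last first.
  by rewrite /= -cats1 map_cat -catA; apply: lex_lt_map.
split=> //.
  by rewrite -cats1 alt_tree_from_cat s_tree /= /tree_edge exi reached_x undom_x.
move=> z; rewrite mem_rcons inE => /orP[/eqP -> | /s_on //].
by rewrite /edge_class /= g_ISR.1.
Qed.

Lemma swap_step g s x : state_inv (State g s (Some x)) -> x != v ->
  (forall i, i \in C -> ~~ e x (g i)) -> descends (State g s (Some x)).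
Proof.
move=> [g_ISR s_tree s_on /andP[reached_x undom_x]] xNv x_free.
have [z zs cz] : exists2 z, z \in s & edge_class z = p x.
  by move: reached_x; rewrite /reached (negbTE xNv) => /mapP[z zs ->]; exists z.
case/splitPr: zs s_tree s_on undom_x => s1 s2 s_tree s_on undom_x.
have zs : z \in s1 ++ z :: s2 by rewrite mem_cat mem_head orbT.
have [zC gz] := s_on z zs.
have x_Nnbr w : w \in s1 ++ z :: s2 -> ~~ e w.1 x.
  by move=> ws; move/hasPn: undom_x => /(_ w ws); rewrite negb_or => /andP[].
have /and3P[ez reached_z undom_z] : tree_edge s1 z.
  by move: s_tree; rewrite alt_tree_from_cat => /andP[_ /= /andP[]].
exists (State (reassign g x) s1 (Some z.1)); first split.
- have -> : C = p x |: C by apply/esym/setUidPr; rewrite sub1set -cz.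
  exact: partial_ISR_reassign.
- by move: s_tree; rewrite alt_tree_from_cat => /andP[].
- move=> w ws; have /s_on[wC gw] : w \in s1 ++ z :: s2 by rewrite mem_cat ws.
  split=> //; rewrite /reassign ifN_eq // -cz.
  by apply: contra (alt_tree_distinct s_tree ws) => /eqP eq_cls; rewrite -gw -gz eq_cls.
- by rewrite reached_z undom_z.
- rewrite /= map_cat -catA; apply: lex_lt_map => [w ws|].
    have /ISR_nbrs_reassign : ~~ e w.1 x by rewrite x_Nnbr // mem_cat ws.
    by move/(_ g)/(leq_trans (leq_addr _ _)); rewrite leq_mul2l => ->; rewrite orbT.
  have := ISR_nbrs_reassign g (x_Nnbr z zs).
  by rewrite -cz zC gz ez /=; lia.
Qed.

Lemma alt_tree_step st : state_inv st ->
  (exists2 g, partial_ISR C g & forall i, i \in C -> ~~ e v (g i)) \/ descends st.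
Proof.
case: st => g s [x|] inv_st; last by right; apply: grow_step.
have [/exists_inP[i iC exi]|/exists_inPn x_free] := boolP [exists i in C, e x (g i)].
  by right; apply: attach_step exi.
have [xv|xNv] := eqVneq x v; last by right; apply: swap_step.
by left; exists g; [case: inv_st | rewrite -xv].
Qed.

Lemma partial_ISR_avoiding g : partial_ISR C g ->
  exists2 g', partial_ISR C g' & forall i, i \in C -> ~~ e v (g' i).
Proof.
move=> g_ISR.
by apply: (lex_descent potential_bounded alt_tree_step (x := State g [::] None)).
Qed.

End AlternatingTree.

Lemma extend_partial_ISR (C : {set 'I_r}) g x : p x \notin C -> partial_ISR C g ->
  exists2 g', partial_ISR (p x |: C) g' & g' (p x) = x.
Proof.
move=> xNC g_ISR; have [g' g'_ISR x_free] := partial_ISR_avoiding xNC g_ISR.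
by exists (reassign g' x); [apply: partial_ISR_reassign | rewrite /reassign eqxx].
Qed.

Lemma partial_ISR_exists (x0 : T) C : exists g, partial_ISR C g.
Proof.
move: {2}#|C| (leqnn #|C|) => n; elim: n C => [|n IH] C.
  by rewrite leqn0 cards_eq0 => /eqP->; exists (fun=> x0); split=> [i|i j]; rewrite inE.
have [-> _|[c cC] le_C] := set_0Vmem C; first by apply: IH; rewrite cards0.
have /set0Pn[x xc] := part_nonempty c; move: xc; rewrite inE => /eqP pxc.
have [|g g_ISR] := IH (C :\ c); first by move: le_C; rewrite (cardsD1 c) cC.
have xN : p x \notin C :\ c by rewrite pxc !inE eqxx.
have [g' g'_ISR _] := extend_partial_ISR xN g_ISR.
by exists g'; rewrite pxc setD1K in g'_ISR.
Qed.

Lemma partial_ISR_through v : exists2 g, partial_ISR [set: 'I_r] g & g (p v) = v.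
Proof.
have [g g_ISR] := partial_ISR_exists v ([set: 'I_r] :\ p v).
have vN : p v \notin [set: 'I_r] :\ p v by rewrite !inE eqxx.
have [g' g'_ISR g'v] := extend_partial_ISR vN g_ISR.
by exists g'; rewrite // setD1K ?inE in g'_ISR.
Qed.

End ISR.

Theorem theorem5 (T : finType) (e : rel T) (r k : nat) (p : T -> 'I_r) :
  (0 < k)%N ->
  simple_graph e ->
  (forall i : 'I_r, part p i != set0) ->
  (forall i : 'I_r, stable e (part p i)) ->
  (forall x : T,
     ((deg e x)%:Z <= Num.min (k%:Z) ((#|part p (p x)|)%:Z - k%:Z))%R) ->
  forall v : T, exists S : {set T}, v \in S /\ is_ISR e p S.
Proof.
move=> _ [e_sym e_irr] part_nonempty _ deg_le v.
have deg_sum_bound x y : deg e x + deg e y <= #|part p (p y)|.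
  by have [+ _] := nat_le_min_sub (deg_le x); have [_ +] := nat_le_min_sub (deg_le y); lia.
have [g g_ISR gv] := partial_ISR_through e_sym e_irr deg_sum_bound part_nonempty v.
exists (g @: [set: 'I_r]); split; last exact: ISR_of_partial_ISR.
by rewrite -gv imset_f ?inE.
Qed.
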